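(* Let $\lambda=(\lambda_1,\lambda_2)\in\mathbb{C}^2$ with $\sigma:=\lambda_1-\lambda_2\notin\mathbb{N}$, and let $\mu\in\mathbb{C}$. Let $M_\lambda$ be the Verma $gl(2)$-module with highest weight vector $v_\lambda$, and let $\widetilde M$ be the $gl(2)$-module of formal series described in the context. Put $$u_\lambda=\sum_{i=0}^{\infty}\frac{(-1)^i\langle\mu\rangle_i}{i!\,\langle\sigma\rangle_i}\,E_{2,1}^i v_\lambda\; x_1^{i+\mu}x_2^{-i+\mu}\in\widetilde M .$$ Then $u_\lambda$ is annihilated by $E_{1,2}$ and has weight $\lambda$, so there is a unique $gl(2)$-module homomorphism $\Phi:M_\lambda\to\widetilde M$ with $\Phi(v_\lambda)=u_\lambda$, and its Etingof trace function is $$E(z_1,z_2)=\frac{z_1^{\lambda_1+1}z_2^{\lambda_2}}{z_1-z_2}\;{}_2F_1\!\left(\mu+1,-\mu;\lambda_2-\lambda_1;\frac{z_2}{z_2-z_1}\right),$$ where the right-hand side is expanded as $z_1^{\lambda_1}z_2^{\lambda_2}$ times a power series in $z_2/z_1$ (i.e. in the region $|z_2|<|z_1|$).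
   Context: $gl(2)$ has basis $E_{i,j}$ (matrix units), $i,j\in\{1,2\}$. For $c\in\mathbb{C}$, $i\in\mathbb{N}$: $(c)_i=c(c+1)\cdots(c+i-1)$ and $\langle c\rangle_i=c(c-1)\cdots(c-i+1)$, with $(c)_0=\langle c\rangle_0=1$. ${}_2F_1(a,b;c;z)=\sum_{m\ge0}\frac{(a)_m(b)_m}{m!(c)_m}z^m$ for $-c\notin\mathbb{N}$. The Verma module $M_\lambda$ has basis $E_{2,1}^iv_\lambda$ ($i\in\mathbb{N}$) with $E_{1,2}v_\lambda=0$, $E_{k,k}v_\lambda=\lambda_kv_\lambda$. $\widetilde M$ is the space of formal series $\sum_{i_1,i_2\in\mathbb{Z}}v_{i_1,i_2}x_1^{i_1+\mu}x_2^{i_2+\mu}$ with $v_{i_1,i_2}\in M_\lambda$ arbitrary, on which $E_{j_1,j_2}$ acts by $E_{j_1,j_2}(v\,x^{m})=E_{j_1,j_2}(v)\,x^m+v\,(x_{j_1}\partial_{x_{j_2}}-\mu\delta_{j_1,j_2})(x^m)$. Writing $\Phi(w)=(x_1x_2)^{\mu}\sum_{\vec k\in\mathbb{Z}^2}\Phi_{\vec k}(w)x_1^{k_1}x_2^{k_2}$ with $\Phi_{\vec k}\in\mathrm{End}(M_\lambda)$, the Etingof trace function is $E(z_1,z_2)=(x_1x_2)^{-\mu}\mathrm{tr}_{M_\lambda}\Phi z_1^{E_{1,1}}z_2^{E_{2,2}}:=\sum_{\nu}\mathrm{tr}(\Phi_{\vec 0}|_{M_\lambda[\nu]})\,z_1^{\nu_1}z_2^{\nu_2}$,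 the sum over weights $\nu$ of $M_\lambda$, where $M_\lambda[\nu]$ is the (finite-dimensional) weight space on which $E_{k,k}$ acts by $\nu_k$. *)

(* Complex numbers: C := R[i] for a real closed field R
   (mathcomp-real-closed's complex); taking R := the real numbers gives C = ℂ. *)
From HB Require Import structures.
From mathcomp Require Import all_boot all_order all_algebra.
From mathcomp Require Import complex.
Set Implicit Arguments. Unset Strict Implicit. Unset Printing Implicit Defensive.
Import Order.TTheory GRing.Theory Num.Theory.
Local Open Scope ring_scope.
Local Open Scope complex_scope.

Section Gl2.
Variable R : rcfType.
Notation C := R[i].

Definition rising (c : C) (n : nat) : C := \prod_(k < n) (c + k%:R).
Definition falling (c : C) (n : nat) : C := \prod_(k < n) (c - k%:R).

(* We represent the element
   sum_i a_i E21^i v_lambda by the polynomial sum_i a_i 'X^i, so 1 = v_lambda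
   and 'X^i = E21^i v_lambda.  The gl(2) action on this basis is the standard
   one: E21 e_i = e_{i+1}, E11 e_i = (l1 - i) e_i, E22 e_i = (l2 + i) e_i,
   E12 e_i = i (l1 - l2 - i + 1) e_{i-1}.                                    *)
Variables (l1 l2 mu : C).
Definition sigma : C := l1 - l2.

Definition vE11 (p : {poly C}) : {poly C} := \poly_(i < size p) ((l1 - i%:R) * p`_i).
Definition vE22 (p : {poly C}) : {poly C} := \poly_(i < size p) ((l2 + i%:R) * p`_i).
Definition vE21 (p : {poly C}) : {poly C} := 'X * p.
Definition vE12 (p : {poly C}) : {poly C} :=
  \poly_(i < size p) ((i.+1)%:R * (sigma - i%:R) * p`_i.+1).

(* ---------- the module M~ of formal series ----------
   f : int -> int -> {poly C} represents sum_{k1,k2} f k1 k2 x1^(k1+mu) x2^(k2+mu)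
   (arbitrary coefficients in M_lambda).  E_{j1,j2}(v x^m)
   = E_{j1,j2}(v) x^m + v (x_{j1} d/dx_{j2} - mu delta_{j1 j2}) x^m.          *)
Definition Mt := int -> int -> {poly C}.

Definition tE11 (f : Mt) : Mt := fun k1 k2 => vE11 (f k1 k2) + k1%:~R *: f k1 k2.
Definition tE22 (f : Mt) : Mt := fun k1 k2 => vE22 (f k1 k2) + k2%:~R *: f k1 k2.
(* x1 d/dx2 : x1^(a+mu) x2^(b+mu) |-> (b+mu) x1^(a+1+mu) x2^(b-1+mu) *)
Definition tE12 (f : Mt) : Mt := fun k1 k2 =>
  vE12 (f k1 k2) + ((k2 + 1)%:~R + mu) *: f (k1 - 1)%R (k2 + 1)%R.
(* x2 d/dx1 : x1^(a+mu) x2^(b+mu) |-> (a+mu) x1^(a-1+mu) x2^(b+1+mu) *)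
Definition tE21 (f : Mt) : Mt := fun k1 k2 =>
  vE21 (f k1 k2) + ((k1 + 1)%:~R + mu) *: f (k1 + 1)%R (k2 - 1)%R.

Definition Mt_zero : Mt := fun _ _ => 0.
Definition Mt_scale (a : C) (f : Mt) : Mt := fun k1 k2 => a *: f k1 k2.

Definition u_coef (n : nat) : C :=
  (-1) ^+ n * falling mu n / (n`!%:R * falling sigma n).
Definition u_lam : Mt := fun k1 k2 =>
  match k1 with
  | Posz n => if k2 == - (n%:Z) then u_coef n *: 'X^n else 0
  | Negz _ => 0
  end.

Definition is_gl2_hom (Phi : {poly C} -> Mt) : Prop :=
  [/\ (forall (a : C) (p q : {poly C}) k1 k2,
         Phi (a *: p + q) k1 k2 = a *: Phi p k1 k2 + Phi q k1 k2),
      (forall p, Phi (vE11 p) = tE11 (Phi p)),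
      (forall p, Phi (vE22 p) = tE22 (Phi p)),
      (forall p, Phi (vE12 p) = tE12 (Phi p)) &
      (forall p, Phi (vE21 p) = tE21 (Phi p))].

(* Phi(w) = (x1 x2)^mu sum_k Phi_k(w) x^k, so Phi_k(w) = Phi w k1 k2. *)
Definition Phi_k (Phi : {poly C} -> Mt) (k1 k2 : int) (w : {poly C}) : {poly C} :=
  Phi w k1 k2.

(* The weight space M_lambda[(l1 - n, l2 + n)] is spanned by the weight basis
   vector E21^n v = 'X^n (and these weights are pairwise distinct), so the
   coefficient of z1^(l1-n) z2^(l2+n) in the Etingof trace function
   E(z1,z2) = sum_nu tr(Phi_0 |_{M_lambda[nu]}) z^nu is the diagonal entry of
   Phi_0 at 'X^n; there are no other weights. *)
Definition etingof_coef (Phi : {poly C} -> Mt) (n : nat) : C :=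
  (Phi_k Phi 0 0 ('X^n))`_n.

(* ---------- right-hand side ----------
   With t = z2/z1 :  z1^(l1+1) z2^(l2) / (z1 - z2) = z1^l1 z2^l2 * 1/(1-t),
   z2/(z2 - z1) = -t/(1-t).  The coefficient of t^n of the formal power series
   1/(1-t) * 2F1(a,b;c; -t/(1-t)) is computed exactly by truncating
   1/(1-t) to geom n = 1 + t + ... + t^n and the hypergeometric sum to m <= n. *)
Definition hyp_term (a b c : C) (m : nat) : C :=
  rising a m * rising b m / (m`!%:R * rising c m).
Definition geom (n : nat) : {poly C} := \sum_(k < n.+1) 'X^k.
Definition rhs_coef (n : nat) : C :=
  (geom n * \sum_(m < n.+1)
      hyp_term (mu + 1) (- mu) (l2 - l1) m *: ((- 'X) * geom n) ^+ m)`_n.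

End Gl2.

(* u_lam is singular of weight lambda: comparing coefficients reduces E12 u = 0 to
   (n+1)(sigma-n) c_(n+1) = (n-mu) c_n for its coefficients c_n, and this recursion is
   where sigma \notin N is needed.  As M_lambda is free over C[E21] on v_lambda, the only
   candidate is Phi(E21^i v_lambda) = E21^i u; the commutation relations of E21 with E11,
   E22 and E12 make E21^i u a weight vector with E12 E21^(n+1) u = (n+1)(sigma-n) E21^n u,
   which is exactly the action on M_lambda, so Phi is a homomorphism.
   The trace coefficient of z^(lambda - n(1,-1)) is the coefficient of E21^n v_lambda x^0
   in E21^n u.  Each application of E21 either lowers the vector or acts by x2 d/dx1 on the
   monomial, so these coefficients obey a Pascal recurrence whose solution is
   sum_j C(n,j) (mu+1)_j c_j.  On the other side, the coefficient of t^n in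
   (1-t)^-1 (-t/(1-t))^m is (-1)^m C(n,m) by the hockey-stick identity, and the two sums
   agree term by term. *)

From HB Require Import structures.
From mathcomp Require Import all_boot all_order all_algebra.
From mathcomp Require Import complex.
From mathcomp Require Import ring zify.
From Stdlib Require Import FunctionalExtensionality.
Set Implicit Arguments.
Unset Strict Implicit.
Unset Printing Implicit Defensive.

Import GRing.Theory Num.Theory.
Local Open Scope ring_scope.

Lemma linear_comb_of {R : pzRingType} {U V : lmodType R} {f : U -> V} (hf : linear f)
  (I : Type) (r : seq I) (P : pred I) (a : I -> R) (F : I -> U) :
  f (\sum_(i <- r | P i) a i *: F i) = \sum_(i <- r | P i) a i *: f (F i).
Proof.
pose g : {linear U -> V} := HB.pack f (GRing.isLinear.Build _ _ _ _ f hf).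
have /= -> := linear_sum g r P (fun i => a i *: F i).
by apply: eq_bigr => i _; exact: (linearZ_LR g).
Qed.

Lemma sum_bin_diag d k : (\sum_(j < d.+1) 'C(j + k, k))%N = 'C(d + k.+1, k.+1).
Proof.
elim: d => [|d IH]; first by rewrite big_ord1 add0n !binn.
by rewrite big_ord_recr /= IH -addSnnS binS addSn addnS.
Qed.

Lemma sum_binS (V : nmodType) n (T : nat -> V) :
  \sum_(j < n.+1) T j *+ 'C(n, j) + \sum_(j < n.+1) T j.+1 *+ 'C(n, j) =
  \sum_(j < n.+2) T j *+ 'C(n.+1, j).
Proof.
rewrite [RHS]big_ord_recl.
under [X in _ = _ + X]eq_bigr do rewrite binS mulrnDr.
rewrite big_split /= addrA; congr (_ + _).
by rewrite [LHS]big_ord_recl [in RHS]big_ord_recr /= !bin0 bin_small // addr0.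
Qed.

Lemma shift_recurrence_sol {K : comPzRingType} {c : nat -> K} {g : nat -> nat -> K} :
  (forall n a, g n.+1 a = g n a + c a * g n a.+1) ->
  forall n a, g n a = \sum_(j < n.+1) (\prod_(t < j) c (a + t)%N) * g 0%N (a + j)%N *+ 'C(n, j).
Proof.
move=> gS; elim=> [|n IH] a; first by rewrite big_ord1 big_ord0 mul1r addn0.
rewrite gS !IH -(sum_binS n (fun j => (\prod_(t < j) c (a + t)%N) * g 0%N (a + j)%N)).
rewrite mulr_sumr; congr (_ + _); apply: eq_bigr => j _.
rewrite mulrnAr mulrA big_ord_recl addn0 addSnnS.
by congr (_ * _ * _ *+ _); apply: eq_bigr => t _; rewrite addSnnS.
Qed.

Section Gl2.
Variable R : rcfType.
Notation C := R[i].
Variables (l1 l2 mu : C).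
Notation u := (u_lam l1 l2 mu).
Notation uc := (u_coef l1 l2 mu).

Lemma coef_vE11 (p : {poly C}) k : (vE11 l1 p)`_k = (l1 - k%:R) * p`_k.
Proof. by rewrite coef_poly; case: ltnP => // ?; rewrite nth_default ?mulr0. Qed.

Lemma coef_vE22 (p : {poly C}) k : (vE22 l2 p)`_k = (l2 + k%:R) * p`_k.
Proof. by rewrite coef_poly; case: ltnP => // ?; rewrite nth_default ?mulr0. Qed.

Lemma coef_vE12 (p : {poly C}) k :
  (vE12 l1 l2 p)`_k = k.+1%:R * (sigma l1 l2 - k%:R) * p`_k.+1.
Proof. by rewrite coef_poly; case: ltnP => // ?; rewrite nth_default ?mulr0 // leqW. Qed.

Lemma vE11_linear : linear (vE11 l1).
Proof. by move=> a p q; apply/polyP => i; rewrite !(coefD, coefZ, coef_vE11); ring. Qed.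

Lemma vE22_linear : linear (vE22 l2).
Proof. by move=> a p q; apply/polyP => i; rewrite !(coefD, coefZ, coef_vE22); ring. Qed.

Lemma vE12_linear : linear (vE12 l1 l2).
Proof. by move=> a p q; apply/polyP => i; rewrite !(coefD, coefZ, coef_vE12); ring. Qed.

Lemma vE21_linear : linear (@vE21 R).
Proof. by move=> a p q; rewrite /vE21 mulrDr scalerAr. Qed.

Lemma Mt_ext (f g : Mt R) : (forall k1 k2, f k1 k2 = g k1 k2) -> f = g.
Proof. by move=> fg; do 2 apply: functional_extensionality => ?; apply: fg. Qed.

Lemma tE11_tE21 f k1 k2 :
  tE11 l1 (tE21 mu f) k1 k2 = tE21 mu (tE11 l1 f) k1 k2 - tE21 mu f k1 k2.
Proof.
apply/polyP => i; rewrite /tE11 /tE21 /vE21.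
rewrite !(coefD, coefN, coefZ, coef_vE11, coefXM, intrD).
by case: i => [|i] /=; rewrite ?mulr0 ?addr0; ring.
Qed.

Lemma tE22_tE21 f k1 k2 :
  tE22 l2 (tE21 mu f) k1 k2 = tE21 mu (tE22 l2 f) k1 k2 + tE21 mu f k1 k2.
Proof.
apply/polyP => i; rewrite /tE22 /tE21 /vE21.
rewrite !(coefD, coefZ, coef_vE22, coefXM, intrD, intrB).
by case: i => [|i] /=; rewrite ?mulr0 ?addr0; ring.
Qed.

Lemma tE12_tE21 f k1 k2 :
  tE12 l1 l2 mu (tE21 mu f) k1 k2 =
  tE21 mu (tE12 l1 l2 mu f) k1 k2 + tE11 l1 f k1 k2 - tE22 l2 f k1 k2.
Proof.
apply/polyP => i; rewrite /tE12 /tE11 /tE22 /tE21 /vE21 !subrK !addrK.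
rewrite !(coefD, coefN, coefZ, coef_vE11, coef_vE22, coef_vE12, coefXM, intrD, intrB).
by rewrite /sigma; case: i => [|i] /=; rewrite ?mulr0 ?addr0; ring.
Qed.

Lemma tE21_scale a f : tE21 mu (Mt_scale a f) = Mt_scale a (tE21 mu f).
Proof.
apply: Mt_ext => k1 k2; rewrite /tE21 /Mt_scale /vE21.
by rewrite scalerDr -scalerAr !scalerA [_ * a]mulrC.
Qed.

Lemma coef_u_lam k1 k2 j :
  (u k1 k2)`_j = if (k1 == j%:Z) && (k2 == - j%:Z) then uc j else 0.
Proof.
case: k1 => [n|n] /=; last by rewrite coef0.
rewrite eqz_nat; case: (eqVneq n j) => [<-|nj] /=.
  by case: eqP; rewrite ?coefZ ?coefXn ?eqxx ?mulr1 ?coef0.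
by case: eqP; rewrite ?coefZ ?coefXn ?coef0 // eq_sym (negbTE nj) mulr0.
Qed.

Lemma tE11_u : tE11 l1 u = Mt_scale l1 u.
Proof.
apply: Mt_ext => k1 k2; apply/polyP => j.
rewrite /tE11 /Mt_scale coefD coef_vE11 !coefZ coef_u_lam.
by case: ifP => [/andP[/eqP-> _]|_]; rewrite ?mulr0 ?addr0 //= -pmulrn; ring.
Qed.

Lemma tE22_u : tE22 l2 u = Mt_scale l2 u.
Proof.
apply: Mt_ext => k1 k2; apply/polyP => j.
rewrite /tE22 /Mt_scale coefD coef_vE22 !coefZ coef_u_lam.
by case: ifP => [/andP[_ /eqP->]|_]; rewrite ?mulr0 ?addr0 // intrN -pmulrn; ring.
Qed.

Definition E21u n : Mt R := iter n (tE21 mu) u.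

Lemma E21uS n : E21u n.+1 = tE21 mu (E21u n).
Proof. by []. Qed.

Lemma tE11_E21u n : tE11 l1 (E21u n) = Mt_scale (l1 - n%:R) (E21u n).
Proof.
elim: n => [|n IH]; first by rewrite tE11_u subr0.
apply: Mt_ext => k1 k2; rewrite E21uS tE11_tE21 IH tE21_scale /Mt_scale.
by rewrite -[X in _ - X]scale1r -scalerBl -natr1 opprD addrA.
Qed.

Lemma tE22_E21u n : tE22 l2 (E21u n) = Mt_scale (l2 + n%:R) (E21u n).
Proof.
elim: n => [|n IH]; first by rewrite tE22_u addr0.
apply: Mt_ext => k1 k2; rewrite E21uS tE22_tE21 IH tE21_scale /Mt_scale.
by rewrite -[X in _ + X]scale1r -scalerDl -natr1 addrA.
Qed.

Definition Phi_u (p : {poly C}) : Mt R :=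
  fun k1 k2 => \sum_(i < size p) p`_i *: E21u i k1 k2.

Lemma Phi_u_widen {N} {p : {poly C}} {k1 k2} :
  (size p <= N)%N -> Phi_u p k1 k2 = \sum_(i < N) p`_i *: E21u i k1 k2.
Proof.
move=> pN; rewrite /Phi_u (big_ord_widen N (fun i => p`_i *: E21u i k1 k2) pN) big_mkcond.
by apply: eq_bigr => i _; case: ltnP => // ?; rewrite nth_default ?scale0r.
Qed.

Lemma Phi_u_linear k1 k2 : linear (fun p => Phi_u p k1 k2).
Proof.
move=> a p q; pose N := (size (a *: p + q)%R + size p + size q)%N.
rewrite !(@Phi_u_widen N) ?/N; try lia.
rewrite scaler_sumr -big_split; apply: eq_bigr => i _.
by rewrite coefD coefZ scalerDl scalerA.
Qed.

Lemma linear_Phi_u {L : {poly C} -> {poly C}} {c : C} {k1 k2 k1' k2'} {N} {p : {poly C}} :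
  linear L -> (size p <= N)%N -> L (Phi_u p k1 k2) + c *: Phi_u p k1' k2' =
  \sum_(i < N) p`_i *: (L (E21u i k1 k2) + c *: E21u i k1' k2').
Proof.
move=> hL pN; rewrite !(Phi_u_widen pN) linear_comb_of // scaler_sumr -big_split.
by apply: eq_bigr => i _; rewrite scalerDr !scalerA mulrC.
Qed.

Lemma Phi_u_vE11 p : Phi_u (vE11 l1 p) = tE11 l1 (Phi_u p).
Proof.
apply: Mt_ext => k1 k2; rewrite (Phi_u_widen (size_poly _ _)).
rewrite /tE11 (linear_Phi_u vE11_linear (leqnn _)); apply: eq_bigr => i _.
by rewrite -[_ + _]/(tE11 l1 (E21u i) k1 k2) tE11_E21u coef_vE11 scalerA mulrC.
Qed.

Lemma Phi_u_vE22 p : Phi_u (vE22 l2 p) = tE22 l2 (Phi_u p).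
Proof.
apply: Mt_ext => k1 k2; rewrite (Phi_u_widen (size_poly _ _)).
rewrite /tE22 (linear_Phi_u vE22_linear (leqnn _)); apply: eq_bigr => i _.
by rewrite -[_ + _]/(tE22 l2 (E21u i) k1 k2) tE22_E21u coef_vE22 scalerA mulrC.
Qed.

Lemma Phi_u_vE21 p : Phi_u (vE21 p) = tE21 mu (Phi_u p).
Proof.
have sz : (size (vE21 p) <= (size p).+1)%N.
  by apply: leq_trans (size_polyMleq _ _) _; rewrite size_polyX add2n.
apply: Mt_ext => k1 k2; rewrite (Phi_u_widen sz) /tE21.
rewrite (linear_Phi_u vE21_linear (leqnSn _)) big_ord_recl big_ord_recr /=.
rewrite coefXM scale0r add0r nth_default ?scale0r ?addr0 //.
by apply: eq_bigr => i _; rewrite coefXM.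
Qed.

Section SingularVector.
Hypothesis sigma_notin_nat : forall n : nat, sigma l1 l2 != n%:R.

Lemma u_coefS n : uc n.+1 * (n.+1%:R * (sigma l1 l2 - n%:R)) = (n%:R - mu) * uc n.
Proof.
have sigma_n : sigma l1 l2 - n%:R != 0 by rewrite subr_eq0.
have fall_sigma : falling (sigma l1 l2) n != 0.
  by apply/prodf_neq0 => i _; rewrite subr_eq0.
rewrite /u_coef /falling !big_ord_recr /= factS natrM exprS.
rewrite -/(falling mu n) -/(falling (sigma l1 l2) n) in fall_sigma *.
field.
by rewrite fall_sigma sigma_n addrC natr1 !pnatr_eq0 -lt0n fact_gt0.
Qed.

Lemma tE12_u : tE12 l1 l2 mu u = Mt_zero R.
Proof.
apply: Mt_ext => k1 k2; apply/polyP => j.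
rewrite /tE12 coefD coefZ coef_vE12 !coef_u_lam coef0.
have -> : (k1 - 1 == j%:Z) && (k2 + 1 == - j%:Z) = (k1 == j.+1%:Z) && (k2 == - j.+1%:Z).
  by congr (_ && _); apply/eqP/eqP; lia.
case: ifP => [/andP[_ /eqP->]|_]; last by rewrite !mulr0 addr0.
rewrite mulrC u_coefS intrD intrN -!pmulrn; ring.
Qed.

Lemma tE12_E21u n :
  tE12 l1 l2 mu (E21u n.+1) = Mt_scale (n.+1%:R * (sigma l1 l2 - n%:R)) (E21u n).
Proof.
elim: n => [|n IH]; apply: Mt_ext => k1 k2; rewrite E21uS tE12_tE21.
  rewrite tE12_u tE11_u tE22_u /Mt_scale /tE21 /Mt_zero /vE21.
  by rewrite mulr0 scaler0 addr0 add0r -scalerBl mul1r subr0.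
rewrite IH tE21_scale tE11_E21u tE22_E21u /Mt_scale -E21uS -scalerDl -scalerBl.
by congr (_ *: _); rewrite /sigma -!natr1; ring.
Qed.

Lemma Phi_u_vE12 p : Phi_u (vE12 l1 l2 p) = tE12 l1 l2 mu (Phi_u p).
Proof.
have sz : (size (vE12 l1 l2 p) <= (size p).+1)%N by rewrite leqW ?size_poly.
apply: Mt_ext => k1 k2; rewrite (Phi_u_widen sz) /tE12.
rewrite (linear_Phi_u vE12_linear (leqnSn _)) big_ord_recr big_ord_recl /=.
rewrite -[vE12 _ _ _ + _]/(tE12 l1 l2 mu u k1 k2) tE12_u scaler0 add0r.
rewrite coef_vE12 nth_default // mulr0 scale0r addr0; apply: eq_bigr => i _.
by rewrite -[_ + _]/(tE12 l1 l2 mu (E21u i.+1) k1 k2) tE12_E21u coef_vE12 scalerA mulrC.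
Qed.

Lemma Phi_u_gl2_hom : is_gl2_hom l1 l2 mu Phi_u.
Proof.
split; [move=> a p q k1 k2; exact: Phi_u_linear | exact: Phi_u_vE11 | exact: Phi_u_vE22
       | exact: Phi_u_vE12 | exact: Phi_u_vE21].
Qed.

End SingularVector.

Lemma Phi_u1 : Phi_u 1 = u.
Proof. by apply: Mt_ext => k1 k2; rewrite /Phi_u size_poly1 big_ord1 coef1 scale1r. Qed.

Lemma gl2_hom_Xn Phi : is_gl2_hom l1 l2 mu Phi -> Phi 1 = u -> forall n, Phi 'X^n = E21u n.
Proof.
case=> _ _ _ _ Phi21 Phi1; elim=> [|n IH]; first by rewrite expr0 Phi1.
by rewrite exprS -[_ * _]/(vE21 _) Phi21 IH.
Qed.

Lemma gl2_hom_unique Phi : is_gl2_hom l1 l2 mu Phi -> Phi 1 = u -> forall w, Phi w = Phi_u w.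
Proof.
move=> hom Phi1 w; have PhiX := gl2_hom_Xn hom Phi1; case: hom => Phi_lin _ _ _ _.
apply: Mt_ext => k1 k2; rewrite -{1}(coefK w) poly_def.
rewrite (linear_comb_of (fun a p q => Phi_lin a p q k1 k2)).
by apply: eq_bigr => i _; rewrite PhiX.
Qed.

Lemma rising_opp (x : C) m : rising (- x) m = (-1) ^+ m * falling x m.
Proof.
elim: m => [|m IH]; first by rewrite /rising /falling !big_ord0 mulr1.
rewrite /rising /falling !big_ord_recr /= -/(rising _ m) -/(falling _ m) IH exprS; ring.
Qed.

Lemma hyp_term_sign m :
  hyp_term (mu + 1) (- mu) (l2 - l1) m * (-1) ^+ m = rising (mu + 1) m * uc m.
Proof.
rewrite /hyp_term /u_coef -opprB -/(sigma l1 l2) !rising_opp.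
rewrite -signr_odd; case: (odd m); rewrite /= ?(expr0, expr1, mulN1r, mul1r, mulrN, invrN); ring.
Qed.

(* By weight, [E21u n a (- a)] is a multiple of ['X^(n + a)]; [diag_coef n a] is that multiple. *)
Definition diag_coef n (a : nat) : C := (E21u n a (- a%:Z))`_(n + a).

Lemma diag_coefS n a :
  diag_coef n.+1 a = diag_coef n a + (mu + 1 + a%:R) * diag_coef n a.+1.
Proof.
rewrite /diag_coef E21uS /tE21 coefD coefZ /vE21 coefXM addSn /=.
have -> : (a%:Z + 1 = a.+1%:Z)%R by lia.
have -> : (- a%:Z - 1 = - a.+1%:Z)%R by lia.
by rewrite addnS -[a.+1%:~R]/(a.+1%:R : C) -natr1; ring.
Qed.

Lemma diag_coef_sum n :
  diag_coef n 0 = \sum_(j < n.+1) rising (mu + 1) j * uc j *+ 'C(n, j).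
Proof.
rewrite (shift_recurrence_sol diag_coefS); apply: eq_bigr => j _.
by rewrite -[\prod_(t < j) _]/(rising (mu + 1) j) /diag_coef !add0n coef_u_lam !eqxx.
Qed.

Lemma coef_geom n j : (geom R n)`_j = (j <= n)%:R.
Proof.
have -> : geom R n = \poly_(i < n.+1) 1.
  by rewrite poly_def; apply: eq_bigr => i _; rewrite scale1r.
by rewrite coef_poly ltnS; case: leqP.
Qed.

Lemma coef_geom_exp n k d : (d <= n)%N -> (geom R n ^+ k.+1)`_d = 'C(d + k, k)%:R.
Proof.
elim: k d => [|k IH] d dn; first by rewrite expr1 coef_geom dn addn0 bin0.
rewrite exprS coefMr -(sum_bin_diag d k) natr_sum; apply: eq_bigr => j _.
have jd : (j <= d)%N by rewrite -ltnS.
by rewrite coef_geom IH ?(leq_trans jd) // (leq_trans (leq_subr _ _) dn) mul1r.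
Qed.

Lemma rhs_coef_sum n : rhs_coef l1 l2 mu n =
  \sum_(m < n.+1) hyp_term (mu + 1) (- mu) (l2 - l1) m * (-1) ^+ m *+ 'C(n, m).
Proof.
rewrite /rhs_coef mulr_sumr coef_sum; apply: eq_bigr => m _.
have mn : (m <= n)%N by rewrite -ltnS.
rewrite -scalerAr coefZ -mulrnAr; congr (_ * _).
have -> : geom R n * (- 'X * geom R n) ^+ m = ((-1) ^+ m)%:P * ('X^m * geom R n ^+ m.+1).
  by rewrite rmorph_sign exprMn (exprNn (polyX _)) exprS; ring.
by rewrite coefCM coefXnM ltnNge mn /= coef_geom_exp ?leq_subr // subnK // mulr_natr.
Qed.

Lemma gl2_hom_trace Phi : is_gl2_hom l1 l2 mu Phi -> Phi 1 = u ->
  forall n, etingof_coef Phi n = rhs_coef l1 l2 mu n.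
Proof.
move=> hom Phi1 n; rewrite /etingof_coef /Phi_k (gl2_hom_Xn hom Phi1) rhs_coef_sum.
have -> : (E21u n 0 0)`_n = diag_coef n 0 by rewrite /diag_coef addn0.
by rewrite diag_coef_sum; apply: eq_bigr => m _; rewrite hyp_term_sign.
Qed.

End Gl2.

Theorem theorem2p1 (R : rcfType) (l1 l2 mu : R[i])
  (hsigma : forall n : nat, sigma l1 l2 != n%:R) :
  [/\ tE12 l1 l2 mu (u_lam l1 l2 mu) = Mt_zero R
      /\ tE11 l1 (u_lam l1 l2 mu) = Mt_scale l1 (u_lam l1 l2 mu)
      /\ tE22 l2 (u_lam l1 l2 mu) = Mt_scale l2 (u_lam l1 l2 mu),
      (exists Phi, is_gl2_hom l1 l2 mu Phi /\ Phi 1 = u_lam l1 l2 mu),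
      (forall Phi Psi, is_gl2_hom l1 l2 mu Phi -> Phi 1 = u_lam l1 l2 mu ->
          is_gl2_hom l1 l2 mu Psi -> Psi 1 = u_lam l1 l2 mu ->
          forall w, Phi w = Psi w) &
      (forall Phi, is_gl2_hom l1 l2 mu Phi -> Phi 1 = u_lam l1 l2 mu ->
          forall n : nat, etingof_coef Phi n = rhs_coef l1 l2 mu n)].
Proof.
split.
- by split; [exact: tE12_u | split; [exact: tE11_u | exact: tE22_u]].
- by exists (Phi_u l1 l2 mu); split; [exact: Phi_u_gl2_hom | exact: Phi_u1].
- move=> Phi Psi homPhi Phi1 homPsi Psi1 w.
  by rewrite (gl2_hom_unique homPhi Phi1) (gl2_hom_unique homPsi Psi1).
- exact: gl2_hom_trace.
Qed.
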